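(* Let $\omega\in\Omega$ be a path and $I$ a closed interval with $I\subseteq(0,1)$. If $\omega$ is wCH-random for $I$, then $\omega$ is not recursive. The same conclusion holds if $\omega$ is $\mathscr S$-random for $I$ for some countable set $\mathscr S$ of selection processes containing all recursive temporal selection processes, or if $\omega$ is $R$-random for $I$ for some $R\in\{\mathrm{ML},\mathrm{wML},\mathrm{C},\mathrm{S}\}$.
   Context: Notation: $\mathbb N=\{1,2,\dots\}$, $\mathbb N_0=\mathbb N\cup\{0\}$. $\Omega=\{0,1\}^{\mathbb N}$ is the set of paths $\omega=(\omega_1,\omega_2,\dots)$; $\omega_{1:n}=(\omega_1,\dots,\omega_n)$, $\omega_{1:0}=\square$. $\mathbb S=\bigcup_{n\in\mathbb N_0}\{0,1\}^n$ is the set of situations, $|s|$ the length, $sx$ concatenation. For $r\in[0,1]$, $f:\{0,1\}\to\mathbb R$: $E_r(f)=rf(1)+(1-r)f(0)$; $\overline E_I(f)=\max_{r\in I}E_r(f)$. A forecasting system is a map $\varphi$ from $\mathbb S$ to closed subintervals of $[0,1]$, with $\underline\varphi(s)=\min\varphi(s)$, $\overline\varphi(s)=\max\varphi(s)$; being random for an interval $I$ means being random for the constant forecasting system with value $I$. Computability: a map from a countable effectively encoded domain ($\mathbb N$, $\mathbb N_0$, $\mathbb S$, products with $\{0,1\}$ and $\mathbb N_0$) to $\mathbb N_0$ or $\mathbb Q$ or $\{0,1\}$ is recursive if Turing-computable; a path is recursive if $n\mapsto\omega_n$ is recursive. A real map $r$ is lower semicomputable if $r(d)=\lim_nq(d,n)$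 for a recursive rational $q$ non-decreasing in $n$, computable if $|r(d)-q(d,n)|<2^{-n}$ for a recursive rational $q$. Selection processes: maps $S:\mathbb S\to\{0,1\}$; temporal if $S(s)$ depends only on $|s|$ (written $S(n)$). For a countable set $\mathscr S$ of selection processes, $\omega$ is $\mathscr S$-random for $\varphi$ if for every $S\in\mathscr S$ with $\lim_n\sum_{k=0}^{n-1}S(\omega_{1:k})=\infty$: $\liminf_n\frac{\sum_{k=0}^{n-1}S(\omega_{1:k})[\omega_{k+1}-\underline\varphi(\omega_{1:k})]}{\sum_{k=0}^{n-1}S(\omega_{1:k})}\ge0$ and $\limsup_n\frac{\sum_{k=0}^{n-1}S(\omega_{1:k})[\omega_{k+1}-\overline\varphi(\omega_{1:k})]}{\sum_{k=0}^{n-1}S(\omega_{1:k})}\le0$. $\omega$ is wCH-random for $\varphi$ if it is $\mathscr S$-random for $\varphi$ with $\mathscr S$ the set of all recursive temporal selection processes. Martingale-theoretic randomness: a real process is $F:\mathbb S\to\mathbb R$, $\Delta F(s)$ is $x\mapsto F(sx)-F(s)$; $M$ is a supermartingale for $\varphi$ if $\overline E_{\varphi(s)}(\Delta M(s))\le0$ for all $s$. A test process is a non-negative real process with $F(\square)=1$; a test supermartingale for $\varphi$ is a test process that is a supermartingale for $\varphi$. A multiplier process $D$ assigns to each $s$ a function $D(s):\{0,1\}\to[0,\infty)$ and generates the test process $F(\square)=1$, $F(sx)=F(s)D(s)(x)$. $\mathscr F_{\mathrm{ML}}$: lower semicomputable test processes; $\mathscr F_{\mathrm{wML}}$: test processes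 generated by lower semicomputable multiplier processes; $\mathscr F_{\mathrm C}=\mathscr F_{\mathrm S}$: positive rational-valued recursive test processes. $\overline{\mathbb T}_R(\varphi)$: elements of $\mathscr F_R$ that are test supermartingales for $\varphi$. For $R\in\{\mathrm{ML},\mathrm{wML},\mathrm C\}$, $\omega$ is $R$-random for $\varphi$ if no $T\in\overline{\mathbb T}_R(\varphi)$ has $\limsup_nT(\omega_{1:n})=\infty$. A real growth function is a computable, non-decreasing, unbounded $\tau:\mathbb N_0\to[0,\infty)$; $\omega$ is S-random for $\varphi$ if there are no $T\in\overline{\mathbb T}_{\mathrm S}(\varphi)$ and real growth function $\tau$ with $\limsup_n[T(\omega_{1:n})-\tau(n)]\ge0$. *)

From Stdlib Require Import Reals Lra List.
From Coquelicot Require Import Coquelicot.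
Open Scope R_scope.

Inductive code : Type :=
| CZero
| CSucc
| CProj (i : nat)
| CComp (f : code) (gs : list code)
| CPrec (f g : code)
| CMu (f : code).

Inductive eval : code -> list nat -> nat -> Prop :=
| ev_zero v : eval CZero v 0
| ev_succ v : eval CSucc v (S (hd 0%nat v))
| ev_proj i v : eval (CProj i) v (nth i v 0%nat)
| ev_comp f gs v ws y :
    Forall2 (fun g w => eval g v w) gs ws -> eval f ws y -> eval (CComp f gs) v y
| ev_prec0 f g v y : eval f v y -> eval (CPrec f g) (0%nat :: v) y
| ev_precS f g n v z y :
    eval (CPrec f g) (n :: v) z -> eval g (n :: z :: v) y ->
    eval (CPrec f g) (S n :: v) y
| ev_mu f v n :
    eval f (n :: v) 0%nat ->
    (forall m, (m < n)%nat -> exists k, k <> 0%nat /\ eval f (m :: v) k) ->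
    eval (CMu f) v n.

Definition recursive_nat (f : nat -> nat) : Prop :=
  exists c : code, forall n, eval c (n :: nil) (f n).

Definition cpair (x y : nat) : nat := (Nat.div ((x + y) * (x + y + 1)) 2 + y)%nat.

(* bijective encoding of situations (finite bit strings) *)
Fixpoint enc_sit (s : list bool) : nat :=
  match s with
  | nil => 0%nat
  | b :: s' => (2 * enc_sit s' + (if b then 2 else 1))%nat
  end.

Definition nat_of_bool (b : bool) : nat := if b then 1%nat else 0%nat.

Definition recursive_on {D : Type} (enc : D -> nat) (f : D -> nat) : Prop :=
  exists g : nat -> nat, recursive_nat g /\ forall d, f d = g (enc d).

Definition recursive_rat_on {D : Type} (enc : D -> nat) (f : D -> R) : Prop :=
  exists p m q : D -> nat,
    recursive_on enc p /\ recursive_on enc m /\ recursive_on enc q /\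
    forall d, f d = (INR (p d) - INR (m d)) / (INR (q d) + 1).

Definition lower_semicomputable {D : Type} (enc : D -> nat) (r : D -> R) : Prop :=
  exists q : D -> nat -> R,
    recursive_rat_on (fun dn : D * nat => cpair (enc (fst dn)) (snd dn))
                     (fun dn => q (fst dn) (snd dn)) /\
    (forall d n, q d n <= q d (S n)) /\
    (forall d, is_lim_seq (q d) (r d)).

Definition computable_real {D : Type} (enc : D -> nat) (r : D -> R) : Prop :=
  exists q : D -> nat -> R,
    recursive_rat_on (fun dn : D * nat => cpair (enc (fst dn)) (snd dn))
                     (fun dn => q (fst dn) (snd dn)) /\
    (forall d n, Rabs (r d - q d n) < / 2 ^ n).

(* A path omega = (omega_1, omega_2, ...) is represented as
   [omega : nat -> bool] with [omega k] = omega_{k+1}. *)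
Definition path := nat -> bool.
Definition sit := list bool.

Definition prefix (omega : path) (n : nat) : sit := map omega (seq 0 n).

Definition b2R (b : bool) : R := if b then 1 else 0.

Definition recursive_path (omega : path) : Prop :=
  recursive_nat (fun n => nat_of_bool (omega n)).

Fixpoint psum (u : nat -> R) (n : nat) : R :=
  match n with
  | O => 0
  | S n' => psum u n' + u n'
  end.

Definition selection := sit -> bool.

Definition temporal (S : selection) : Prop :=
  forall s t : sit, length s = length t -> S s = S t.

Definition recursive_selection (S : selection) : Prop :=
  recursive_on enc_sit (fun s => nat_of_bool (S s)).

Definition rec_temporal (S : selection) : Prop :=
  recursive_selection S /\ temporal S.

Definition countable_set {T : Type} (SS : T -> Prop) : Prop :=
  exists e : nat -> T, forall x, SS x -> exists n, e n = x.

(* omega is SS-random for the constant forecasting system I = [a, b]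
   (lower forecast a, upper forecast b). *)
Definition sel_random (SS : selection -> Prop) (omega : path) (a b : R) : Prop :=
  forall S : selection, SS S ->
    let sel k := b2R (S (prefix omega k)) in
    is_lim_seq (psum sel) p_infty ->
    Rbar_le (Finite 0)
      (LimInf_seq (fun n => psum (fun k => sel k * (b2R (omega k) - a)) n
                            / psum sel n)) /\
    Rbar_le
      (LimSup_seq (fun n => psum (fun k => sel k * (b2R (omega k) - b)) n
                            / psum sel n)) (Finite 0).

Definition wCH_random (omega : path) (a b : R) : Prop :=
  sel_random rec_temporal omega a b.

Definition process := sit -> R.

Definition Er (r : R) (f : bool -> R) : R := r * f true + (1 - r) * f false.

Definition Delta (F : process) (s : sit) : bool -> R :=
  fun x => F (s ++ x :: nil) - F s.

Definition supermartingale (M : process) (a b : R) : Prop :=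
  forall s : sit, forall r, a <= r <= b -> Er r (Delta M s) <= 0.

Definition test_process (F : process) : Prop :=
  F nil = 1 /\ forall s, 0 <= F s.

Definition test_supermartingale (T : process) (a b : R) : Prop :=
  test_process T /\ supermartingale T a b.

Definition multiplier_process (D : sit -> bool -> R) : Prop :=
  forall s x, 0 <= D s x.

Definition generated_by (D : sit -> bool -> R) (F : process) : Prop :=
  F nil = 1 /\ forall s x, F (s ++ x :: nil) = F s * D s x.

Definition enc_sit_bool (sx : sit * bool) : nat :=
  cpair (enc_sit (fst sx)) (nat_of_bool (snd sx)).

Definition F_ML (T : process) : Prop :=
  test_process T /\ lower_semicomputable enc_sit T.

Definition F_wML (T : process) : Prop :=
  exists D : sit -> bool -> R,
    multiplier_process D /\
    lower_semicomputable enc_sit_bool (fun sx => D (fst sx) (snd sx)) /\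
    generated_by D T.

(* F_C = F_S : positive rational-valued recursive test processes *)
Definition F_C (T : process) : Prop :=
  test_process T /\ (forall s, 0 < T s) /\ recursive_rat_on enc_sit T.

Definition martingale_random (FR : process -> Prop) (omega : path) (a b : R) : Prop :=
  ~ exists T : process, FR T /\ test_supermartingale T a b /\
      LimSup_seq (fun n => T (prefix omega n)) = p_infty.

Definition ML_random := martingale_random F_ML.
Definition wML_random := martingale_random F_wML.
Definition C_random := martingale_random F_C.

Definition real_growth_function (tau : nat -> R) : Prop :=
  computable_real (fun n : nat => n) tau /\
  (forall n, 0 <= tau n) /\
  (forall n m, (n <= m)%nat -> tau n <= tau m) /\
  (forall M, exists n, M < tau n).

Definition S_random (omega : path) (a b : R) : Prop :=
  ~ exists (T : process) (tau : nat -> R),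
      F_C T /\ test_supermartingale T a b /\ real_growth_function tau /\
      Rbar_le (Finite 0) (LimSup_seq (fun n => T (prefix omega n) - tau n)).

(* If omega is recursive, so are the temporal selection rules "select n when
   omega_(n+1) = c" for c = 0, 1.  One of them selects infinitely often, and all the bits
   it selects equal c, so their relative frequency is 1 > max I or 0 < min I.
   Likewise, the process whose capital is multiplied by 1 + x when the next bit agrees
   with omega and by 1/2 otherwise is, for a rational 0 < x <= min (min I, 1 - max I) / 2,
   a positive recursive rational test supermartingale for I.  Along omega it equals
   (1 + x)^n >= 1 + n x, so it is unbounded and outgrows the growth function n x. *)

From Pilot Require Import Defs.
From Stdlib Require Import Reals Lra Lia List Arith Cantor Classical.
From Coquelicot Require Import Coquelicot.
Import ListNotations.
Open Scope nat_scope.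

(** * Partial recursive functions *)

Definition computable (f : list nat -> nat) : Prop :=
  exists c : code, forall v, eval c v (f v).

Definition computable1 (f : nat -> nat) : Prop :=
  computable (fun v => f (nth 0 v 0)).

Definition computable2 (f : nat -> nat -> nat) : Prop :=
  computable (fun v => f (nth 0 v 0) (nth 1 v 0)).

Lemma computable_ext f g : computable f -> (forall v, f v = g v) -> computable g.
Proof. intros [c Hc] Efg. exists c. intro v. rewrite <- Efg. apply Hc. Qed.

Lemma computable_proj i : computable (fun v => nth i v 0).
Proof. exists (CProj i). intro v. constructor. Qed.

Lemma computable1_comp f g : computable1 f -> computable g -> computable (fun v => f (g v)).
Proof.
  intros [cf Hf] [cg Hg]. exists (CComp cf [cg]). intro v.
  apply ev_comp with (ws := [g v]); [repeat constructor; apply Hg | apply Hf].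
Qed.

Lemma computable2_comp f g h :
  computable2 f -> computable g -> computable h -> computable (fun v => f (g v) (h v)).
Proof.
  intros [cf Hf] [cg Hg] [ch Hh]. exists (CComp cf [cg; ch]). intro v.
  apply ev_comp with (ws := [g v; h v]); [repeat constructor; auto | apply Hf].
Qed.

Lemma computable1_succ : computable1 S.
Proof. exists CSucc. intros [|n v]; constructor. Qed.

Lemma computable_const n : computable (fun _ => n).
Proof.
  induction n as [|n IHn]; [exists CZero; intro; constructor |].
  exact (computable1_comp S _ computable1_succ IHn).
Qed.

Create HintDb computable.
#[local] Hint Resolve computable_proj computable_const : computable.
#[local] Hint Unfold computable1 computable2 : computable.

Lemma computable2_primrec (F : nat -> nat -> nat) f g :
  computable1 f -> computable g ->
  (forall p, F 0 p = f p) -> (forall n p, F (S n) p = g [n; F n p; p]) ->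
  computable2 F.
Proof.
  intros [cf Hf] [cg Hg] F0 FS. exists (CComp (CPrec cf cg) [CProj 0; CProj 1]). intro v.
  apply ev_comp with (ws := [nth 0 v 0; nth 1 v 0]); [repeat constructor |].
  induction (nth 0 v 0) as [|n IHn].
  - constructor. rewrite F0. apply (Hf [nth 1 v 0]).
  - econstructor; [exact IHn |]. rewrite FS. apply Hg.
Qed.

Lemma computable_least_zero f m : computable f ->
  (forall v, f (m v :: v) = 0 /\ forall k, k < m v -> f (k :: v) <> 0) ->
  computable m.
Proof.
  intros [cf Hf] Hm. exists (CMu cf). intro v. destruct (Hm v) as [Hzero Hmin].
  constructor.
  - rewrite <- Hzero. apply Hf.
  - intros k Hk. exists (f (k :: v)). auto.
Qed.

Lemma computable_succ g : computable g -> computable (fun v => S (g v)).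
Proof. apply computable1_comp, computable1_succ. Qed.
#[local] Hint Resolve computable_succ : computable.

Lemma computable2_add : computable2 Nat.add.
Proof.
  apply (computable2_primrec _ (fun p => p) (fun w => S (nth 1 w 0)));
    auto with computable.
Qed.

Lemma computable_add g h : computable g -> computable h -> computable (fun v => g v + h v).
Proof. apply computable2_comp, computable2_add. Qed.
#[local] Hint Resolve computable_add : computable.

Lemma computable1_primrec (F : nat -> nat) (g : nat -> nat -> nat) :
  computable2 g -> (forall n, F (S n) = g n (F n)) -> computable1 F.
Proof.
  intros Hg FS.
  pose proof (computable2_primrec (fun n _ => F n) (fun _ => F 0)
    (fun w => g (nth 0 w 0) (nth 1 w 0)) (computable_const _) Hg
    (fun _ => eq_refl) (fun n _ => FS n)) as H.
  exact (computable2_comp _ _ _ H (computable_proj 0) (computable_proj 0)).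
Qed.

Lemma computable_pred g : computable g -> computable (fun v => pred (g v)).
Proof.
  apply computable1_comp. apply (computable1_primrec _ (fun n _ => n));
    auto with computable.
Qed.
#[local] Hint Resolve computable_pred : computable.

Lemma computable_sub g h : computable g -> computable h -> computable (fun v => g v - h v).
Proof.
  intros Hg Hh. apply (computable2_comp (fun x y => y - x)); auto.
  apply (computable2_primrec _ (fun p => p) (fun w => pred (nth 1 w 0)));
    auto with computable; intros; simpl; lia.
Qed.
#[local] Hint Resolve computable_sub : computable.

Lemma computable_mul g h : computable g -> computable h -> computable (fun v => g v * h v).
Proof.
  apply computable2_comp.
  apply (computable2_primrec _ (fun _ => 0) (fun w => nth 2 w 0 + nth 1 w 0));
    auto with computable.
Qed.
#[local] Hint Resolve computable_mul : computable.

Lemma computable_pow g h : computable g -> computable h -> computable (fun v => g v ^ h v).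
Proof.
  intros Hg Hh. apply (computable2_comp (fun x y => y ^ x)); auto.
  apply (computable2_primrec _ (fun _ => 1) (fun w => nth 2 w 0 * nth 1 w 0));
    auto with computable.
Qed.
#[local] Hint Resolve computable_pow : computable.

Lemma computable_eqb g h :
  computable g -> computable h -> computable (fun v => Nat.b2n (g v =? h v)).
Proof.
  intros Hg Hh. apply (computable_ext (fun v => 1 - ((g v - h v) + (h v - g v)))).
  - auto with computable.
  - intro v. destruct (Nat.eqb_spec (g v) (h v)) as [E|E]; simpl Nat.b2n; [rewrite E|]; lia.
Qed.
#[local] Hint Resolve computable_eqb : computable.

Lemma computable_cond (b : list nat -> bool) g h :
  computable (fun v => Nat.b2n (b v)) -> computable g -> computable h ->
  computable (fun v => if b v then g v else h v).
Proof.
  intros Hb Hg Hh.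
  apply (computable_ext (fun v => Nat.b2n (b v) * g v + (1 - Nat.b2n (b v)) * h v)).
  - auto with computable.
  - intro v. destruct (b v); simpl; lia.
Qed.

Lemma computable_odd g : computable g -> computable (fun v => Nat.b2n (Nat.odd (g v))).
Proof.
  apply (computable1_comp (fun n => Nat.b2n (Nat.odd n))).
  apply (computable1_primrec _ (fun _ z => 1 - z)); [auto with computable |].
  intro n. rewrite Nat.odd_succ, <- Nat.negb_odd. now destruct (Nat.odd n).
Qed.
#[local] Hint Resolve computable_odd : computable.

Lemma div2_succ n : Nat.div2 (S n) = Nat.div2 n + Nat.b2n (Nat.odd n).
Proof.
  pose proof (Nat.div2_odd n) as Hn. pose proof (Nat.div2_odd (S n)) as HSn.
  rewrite Nat.odd_succ, <- Nat.negb_odd in HSn. destruct (Nat.odd n); simpl in *; lia.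
Qed.

Lemma computable_div2 g : computable g -> computable (fun v => Nat.div2 (g v)).
Proof.
  apply computable1_comp.
  apply (computable1_primrec _ (fun n z => z + Nat.b2n (Nat.odd n)));
    [auto with computable | apply div2_succ].
Qed.
#[local] Hint Resolve computable_div2 : computable.

Lemma computable_testbit g h :
  computable g -> computable h -> computable (fun v => Nat.b2n (Nat.testbit (g v) (h v))).
Proof.
  intros Hg Hh.
  assert (Hshiftr : computable2 (fun n a => Nat.shiftr a n)).
  { apply (computable2_primrec _ (fun p => p) (fun w => Nat.div2 (nth 1 w 0)));
      auto with computable. }
  apply (computable_ext (fun v => Nat.b2n (Nat.odd (Nat.shiftr (g v) (h v))))).
  - apply computable_odd. exact (computable2_comp _ _ _ Hshiftr Hh Hg).
  - intro v. now rewrite Nat.testbit_odd.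
Qed.
#[local] Hint Resolve computable_testbit : computable.

Lemma computable_log2 g : computable g -> computable (fun v => Nat.log2 (g v)).
Proof.
  apply computable1_comp.
  apply (computable_least_zero (fun w => S (nth 1 w 0) - 2 ^ S (nth 0 w 0)));
    [auto with computable |].
  intro v. simpl nth. set (z := nth 0 v 0).
  destruct (Nat.eq_dec z 0) as [Hz|Hz].
  - rewrite Hz, Nat.log2_nonpos by lia. split; [reflexivity | lia].
  - destruct (Nat.log2_spec z) as [Hlo Hhi]; [lia |].
    split; [lia |]. intros k Hk.
    assert (2 ^ S k <= 2 ^ Nat.log2 z) by (apply Nat.pow_le_mono_r; lia). lia.
Qed.
#[local] Hint Resolve computable_log2 : computable.

Definition tri (n : nat) : nat := Nat.div2 (n * S n).

Lemma to_nat_tri x y : Cantor.to_nat (x, y) = y + tri (x + y).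
Proof. now rewrite to_nat_spec2, (Nat.add_comm y x), <- Nat.div2_div. Qed.

Lemma tri_succ k : tri (S k) = tri k + S k.
Proof.
  unfold tri. rewrite !Nat.div2_div, <- Nat.div_add by lia. f_equal. lia.
Qed.

Lemma tri_le_mono k l : k <= l -> tri k <= tri l.
Proof. intro Hkl. apply Nat.div2_le_mono, Nat.mul_le_mono; lia. Qed.

Lemma computable_tri g : computable g -> computable (fun v => tri (g v)).
Proof. unfold tri. auto with computable. Qed.
#[local] Hint Resolve computable_tri : computable.

(* For [z = to_nat (x, y) = y + tri (x + y)], the diagonal [x + y] is the least [k]
   with [z < tri (S k)]. *)
Lemma computable_of_nat_diag g :
  computable g -> computable (fun v => fst (Cantor.of_nat (g v)) + snd (Cantor.of_nat (g v))).
Proof.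
  apply (computable1_comp (fun z => fst (Cantor.of_nat z) + snd (Cantor.of_nat z))).
  apply (computable_least_zero (fun w => S (nth 1 w 0) - tri (S (nth 0 w 0))));
    [auto with computable |].
  intro v. simpl nth. set (z := nth 0 v 0).
  pose proof (cancel_to_of z) as Hz. destruct (Cantor.of_nat z) as [x y]. simpl fst; simpl snd.
  rewrite to_nat_tri in Hz. rewrite tri_succ. split; [lia |].
  intros k Hk. pose proof (tri_le_mono (S k) (x + y) Hk). lia.
Qed.

Lemma computable_of_nat_snd g :
  computable g -> computable (fun v => snd (Cantor.of_nat (g v))).
Proof.
  intro Hg. apply (computable_ext (fun v =>
    g v - tri (fst (Cantor.of_nat (g v)) + snd (Cantor.of_nat (g v))))).
  - pose proof (computable_of_nat_diag g Hg). auto with computable.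
  - intro v. pose proof (cancel_to_of (g v)) as Hz. destruct (Cantor.of_nat (g v)) as [x y].
    rewrite to_nat_tri in Hz. simpl. lia.
Qed.
#[local] Hint Resolve computable_of_nat_snd : computable.

Lemma computable_of_nat_fst g :
  computable g -> computable (fun v => fst (Cantor.of_nat (g v))).
Proof.
  intro Hg. apply (computable_ext (fun v =>
    (fst (Cantor.of_nat (g v)) + snd (Cantor.of_nat (g v))) - snd (Cantor.of_nat (g v)))).
  - pose proof (computable_of_nat_diag g Hg). auto with computable.
  - intro v. lia.
Qed.
#[local] Hint Resolve computable_of_nat_fst : computable.

Lemma of_nat_cpair x y : Cantor.of_nat (cpair x y) = (x, y).
Proof.
  rewrite <- (cancel_of_to (x, y)). f_equal.
  unfold cpair. rewrite to_nat_spec2. replace (x + y + 1) with (S (y + x)) by lia.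
  rewrite (Nat.add_comm x y). lia.
Qed.

Lemma recursive_on_computable {D : Type} (enc : D -> nat) (f : D -> nat) g :
  computable g -> (forall d, f d = g [enc d]) -> recursive_on enc f.
Proof.
  intros [c Hc] Hf. exists (fun n => g [n]).
  split; [exists c; intro; apply Hc | exact Hf].
Qed.

(** * Situations as binary numerals *)

Lemma computable_path (omega : path) g :
  recursive_path omega -> computable g -> computable (fun v => nat_of_bool (omega (g v))).
Proof.
  intros [c Hc] Hg. apply (computable1_comp (fun n => nat_of_bool (omega n))); [| exact Hg].
  exists (CComp c [CProj 0]). intro v.
  apply ev_comp with (ws := [nth 0 v 0]); [repeat constructor | apply Hc].
Qed.

(* [sit_code s] is the binary numeral whose digits, least significant first, are the
   bits of [s] followed by a leading 1. *)
Definition sit_code (s : sit) : nat := S (enc_sit s).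

Lemma sit_code_cons x s : sit_code (x :: s) = 2 * sit_code s + Nat.b2n x.
Proof. unfold sit_code. destruct x; simpl; lia. Qed.

Lemma length_sit_code s : length s = Nat.log2 (sit_code s).
Proof.
  symmetry. apply Nat.log2_unique; [lia |].
  induction s as [|x s IHs]; [unfold sit_code; simpl; lia |].
  rewrite sit_code_cons. simpl length. rewrite !Nat.pow_succ_r'.
  rewrite Nat.pow_succ_r' in IHs. destruct x; simpl Nat.b2n; lia.
Qed.

Lemma nth_sit_code s k : k < length s -> nth k s false = Nat.testbit (sit_code s) k.
Proof.
  revert k. induction s as [|x s IHs]; intros k Hk; simpl in Hk; [lia |].
  rewrite sit_code_cons. destruct k as [|k].
  - now rewrite Nat.testbit_0_r.
  - rewrite Nat.testbit_succ_r. apply IHs. lia.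
Qed.

Fixpoint count_lt (p : nat -> bool) (n : nat) : nat :=
  match n with O => O | S n => count_lt p n + Nat.b2n (p n) end.

Lemma count_lt_ext p q n : (forall k, k < n -> p k = q k) -> count_lt p n = count_lt q n.
Proof. induction n as [|n IHn]; intro Hpq; simpl; [reflexivity |]. rewrite IHn, Hpq; auto. Qed.

Lemma count_lt_le p n : count_lt p n <= n.
Proof. induction n as [|n IHn]; simpl; [lia |]. pose proof (Nat.b2n_le_1 (p n)). lia. Qed.

Lemma count_lt_all p n : (forall k, k < n -> p k = true) -> count_lt p n = n.
Proof.
  induction n as [|n IHn]; intro Hp; simpl; [reflexivity |].
  rewrite IHn, Hp; simpl; auto; lia.
Qed.

Lemma computable_count_lt (p : nat -> nat -> bool) :
  computable2 (fun k c => Nat.b2n (p k c)) -> computable2 (fun n c => count_lt (fun k => p k c) n).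
Proof.
  intro Hp. apply (computable2_primrec _ (fun _ => 0)
    (fun w => nth 1 w 0 + Nat.b2n (p (nth 0 w 0) (nth 2 w 0)))); auto with computable.
  apply computable_add; [apply computable_proj |].
  exact (computable2_comp _ _ _ Hp (computable_proj 0) (computable_proj 2)).
Qed.

Lemma b2n_eqb b c : Nat.b2n (Bool.eqb b c) = Nat.b2n (Nat.b2n b =? Nat.b2n c).
Proof. now destruct b, c. Qed.

Definition agreements (omega : path) (s : sit) : nat :=
  count_lt (fun k => Bool.eqb (nth k s false) (omega k)) (length s).

Lemma agreements_le omega s : agreements omega s <= length s.
Proof. apply count_lt_le. Qed.

Lemma agreements_snoc omega s y :
  agreements omega (s ++ [y]) = agreements omega s + Nat.b2n (Bool.eqb y (omega (length s))).
Proof.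
  unfold agreements. rewrite length_app, Nat.add_1_r. simpl count_lt. rewrite nth_middle.
  f_equal. apply count_lt_ext. intros k Hk. now rewrite app_nth1.
Qed.

Lemma length_prefix omega n : length (prefix omega n) = n.
Proof. unfold prefix. now rewrite length_map, length_seq. Qed.

Lemma agreements_prefix omega n : agreements omega (prefix omega n) = n.
Proof.
  unfold agreements. rewrite length_prefix. apply count_lt_all. intros k Hk.
  unfold prefix. rewrite nth_indep with (d' := omega 0) by (rewrite length_map, length_seq; lia).
  rewrite map_nth, seq_nth by lia. apply Bool.eqb_reflx.
Qed.

Definition code_agreements (omega : path) (c : nat) : nat :=
  count_lt (fun k => Bool.eqb (Nat.testbit c k) (omega k)) (Nat.log2 c).

Lemma agreements_sit_code omega s : agreements omega s = code_agreements omega (sit_code s).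
Proof.
  unfold agreements, code_agreements. rewrite <- length_sit_code.
  apply count_lt_ext. intros k Hk. now rewrite nth_sit_code.
Qed.

Lemma computable_code_agreements omega g :
  recursive_path omega -> computable g -> computable (fun v => code_agreements omega (g v)).
Proof.
  intros Homega Hg. unfold code_agreements.
  apply (computable2_comp (fun n c => count_lt (fun k => Bool.eqb (Nat.testbit c k) (omega k)) n));
    auto with computable.
  apply computable_count_lt. apply (computable_ext (fun v =>
    Nat.b2n (Nat.b2n (Nat.testbit (nth 1 v 0) (nth 0 v 0)) =? nat_of_bool (omega (nth 0 v 0))))).
  - apply computable_eqb; [auto with computable | now apply computable_path, computable_proj].
  - intro v. rewrite b2n_eqb. reflexivity.
Qed.

Open Scope R_scope.

Lemma recursive_rat_on_div {D : Type} (enc : D -> nat) (f : D -> R) (p q : list nat -> nat) :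
  computable p -> computable q -> (forall d, 0 < q [enc d])%nat ->
  (forall d, f d = INR (p [enc d]) / INR (q [enc d])) -> recursive_rat_on enc f.
Proof.
  intros Hp Hq Hpos Hf.
  exists (fun d => p [enc d]), (fun _ => 0%nat), (fun d => q [enc d] - 1)%nat.
  split; [| split; [| split]].
  - now apply (recursive_on_computable enc _ p).
  - now apply (recursive_on_computable enc _ (fun _ => 0%nat)); [apply computable_const |].
  - apply (recursive_on_computable enc _ (fun v => q v - 1)%nat); auto with computable.
  - intro d. rewrite Hf, <- S_INR. simpl (INR 0).
    f_equal; [ring | f_equal; specialize (Hpos d); lia].
Qed.

Lemma lower_semicomputable_recursive_rat {D : Type} (enc : D -> nat) (r : D -> R) :
  recursive_rat_on (fun dn : D * nat => cpair (enc (fst dn)) (snd dn)) (fun dn => r (fst dn)) ->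
  lower_semicomputable enc r.
Proof.
  intro Hr. exists (fun d _ => r d).
  split; [exact Hr | split; [intros; apply Rle_refl | intro; apply is_lim_seq_const]].
Qed.

(** * Betting on the next bit of a recursive path *)

Definition bet (omega : path) (x : R) (s : sit) : R :=
  (1 + x) ^ agreements omega s * (/ 2) ^ (length s - agreements omega s).

Definition bet_factor (omega : path) (x : R) (s : sit) (y : bool) : R :=
  if Bool.eqb y (omega (length s)) then 1 + x else / 2.

Section Betting.

Variables (omega : path) (x : R).
Hypothesis x_ge0 : 0 <= x.

Lemma bet_nil : bet omega x [] = 1.
Proof. unfold bet, agreements. simpl. ring. Qed.

Lemma bet_snoc s y : bet omega x (s ++ [y]) = bet omega x s * bet_factor omega x s y.
Proof.
  unfold bet, bet_factor. rewrite agreements_snoc, length_app. simpl length.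
  pose proof (agreements_le omega s) as Hle.
  destruct (Bool.eqb y (omega (length s))); simpl Nat.b2n.
  - rewrite Nat.add_1_r. replace (length s + 1 - S (agreements omega s))%nat
      with (length s - agreements omega s)%nat by lia. simpl. ring.
  - rewrite Nat.add_0_r. replace (length s + 1 - agreements omega s)%nat
      with (S (length s - agreements omega s)) by lia. simpl. ring.
Qed.

Lemma bet_pos s : 0 < bet omega x s.
Proof. unfold bet. apply Rmult_lt_0_compat; apply pow_lt; lra. Qed.

Lemma bet_prefix n : bet omega x (prefix omega n) = (1 + x) ^ n.
Proof. unfold bet. rewrite agreements_prefix, length_prefix, Nat.sub_diag. simpl. ring. Qed.

Lemma bet_test_supermartingale a b :
  2 * x <= a -> 2 * x <= 1 - b -> test_supermartingale (bet omega x) a b.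
Proof.
  intros Hxa Hxb. split; [split; [apply bet_nil | intro s; apply Rlt_le, bet_pos] |].
  intros s r Hr. unfold Er, Defs.Delta. rewrite !bet_snoc. unfold bet_factor.
  pose proof (bet_pos s) as Hs. set (t := bet omega x s) in *.
  destruct (omega (length s)); simpl Bool.eqb.
  - assert (r * x <= x) by nra. nra.
  - assert ((1 - r) * x <= x) by nra. nra.
Qed.

Lemma LimSup_bet_prefix : 0 < x -> LimSup_seq (fun n => bet omega x (prefix omega n)) = p_infty.
Proof.
  intro Hx. apply is_LimSup_seq_unique, is_lim_LimSup_seq.
  apply (is_lim_seq_ext (fun n => (1 + x) ^ n)); [intro n; now rewrite bet_prefix |].
  apply is_lim_seq_geom_p. lra.
Qed.

Lemma LimSup_bet_prefix_linear :
  Rbar_le 0 (LimSup_seq (fun n => bet omega x (prefix omega n) - INR n * x)).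
Proof.
  rewrite <- (LimSup_seq_const 0). apply LimSup_le. exists 0%nat. intros n _.
  rewrite bet_prefix. pose proof (Rle_pow_lin x n x_ge0). lra.
Qed.

End Betting.

Section RecursiveBetting.

Variables (omega : path) (N : nat).
Hypotheses (omega_rec : recursive_path omega) (N_pos : (0 < N)%nat).

Let x := / INR N.
Let INR_N_pos : 0 < INR N := lt_0_INR N N_pos.
Let x_ge0 : 0 <= x := Rlt_le _ _ (Rinv_0_lt_compat _ INR_N_pos).

Lemma bet_inv_INR s :
  bet omega x s = INR ((N + 1) ^ agreements omega s)
                  / INR (N ^ agreements omega s * 2 ^ (length s - agreements omega s)).
Proof.
  pose proof INR_N_pos. unfold bet, x.
  rewrite mult_INR, !pow_INR, plus_INR. replace (INR 2) with 2 by reflexivity. simpl (INR 1).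
  replace (1 + / INR N) with ((INR N + 1) / INR N) by (field; lra).
  unfold Rdiv. rewrite Rpow_mult_distr, !pow_inv.
  field. split; apply pow_nonzero; lra.
Qed.

Lemma recursive_rat_on_bet {D : Type} (enc : D -> nat) (sd : D -> sit) (dec : list nat -> nat) :
  computable dec -> (forall d, dec [enc d] = sit_code (sd d)) ->
  recursive_rat_on enc (fun d => bet omega x (sd d)).
Proof.
  intros Hdec Hcode.
  pose proof (computable_code_agreements omega dec omega_rec Hdec) as Hagr.
  apply (recursive_rat_on_div enc _
    (fun v => (N + 1) ^ code_agreements omega (dec v))%nat
    (fun v => N ^ code_agreements omega (dec v)
              * 2 ^ (Nat.log2 (dec v) - code_agreements omega (dec v)))%nat);
    auto with computable.
  - intro d. pose proof (Nat.pow_nonzero N (code_agreements omega (dec [enc d]))).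
    pose proof (Nat.pow_nonzero 2 (Nat.log2 (dec [enc d]) - code_agreements omega (dec [enc d]))).
    nia.
  - intro d. now rewrite bet_inv_INR, Hcode, <- length_sit_code, <- agreements_sit_code.
Qed.

Lemma bet_test_process : test_process (bet omega x).
Proof. split; [apply bet_nil | intro s; apply Rlt_le, bet_pos, x_ge0]. Qed.

Lemma F_C_bet : F_C (bet omega x).
Proof.
  split; [apply bet_test_process | split; [apply bet_pos, x_ge0 |]].
  apply (recursive_rat_on_bet enc_sit (fun s => s) (fun v => S (nth 0 v 0%nat)));
    [auto with computable | reflexivity].
Qed.

Lemma F_ML_bet : F_ML (bet omega x).
Proof.
  split; [apply bet_test_process |]. apply lower_semicomputable_recursive_rat.
  apply (recursive_rat_on_bet _ fst (fun v => S (fst (Cantor.of_nat (nth 0 v 0%nat)))));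
    [auto with computable |].
  intros [s n]. simpl. now rewrite of_nat_cpair.
Qed.

Lemma bet_factor_inv_INR s y :
  bet_factor omega x s y =
  INR (if Bool.eqb y (omega (length s)) then N + 1 else 1)%nat
  / INR (if Bool.eqb y (omega (length s)) then N else 2)%nat.
Proof.
  pose proof INR_N_pos. unfold bet_factor, x.
  destruct (Bool.eqb y (omega (length s))); [rewrite plus_INR; simpl (INR 1); field; lra |].
  simpl. field.
Qed.

Lemma F_wML_bet : F_wML (bet omega x).
Proof.
  exists (bet_factor omega x). split; [| split].
  - intros s y. unfold bet_factor. pose proof x_ge0. destruct (Bool.eqb _ _); lra.
  - apply lower_semicomputable_recursive_rat.
    set (sy v := fst (Cantor.of_nat (nth 0 v 0%nat))).
    set (agree v := (nat_of_bool (omega (Nat.log2 (S (fst (Cantor.of_nat (sy v))))))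
                     =? snd (Cantor.of_nat (sy v)))%nat).
    assert (Hagree : forall s y n,
      agree [cpair (enc_sit_bool (s, y)) n] = Bool.eqb y (omega (length s))).
    { intros s y n. unfold agree, sy, enc_sit_bool. simpl.
      rewrite of_nat_cpair. simpl. rewrite of_nat_cpair. simpl.
      fold (sit_code s). rewrite <- length_sit_code. now destruct y, (omega (length s)). }
    assert (Hb : computable (fun v => Nat.b2n (agree v))).
    { unfold agree, sy. apply computable_eqb; [apply computable_path |]; auto with computable. }
    apply (recursive_rat_on_div _ _ (fun v => if agree v then N + 1 else 1)%nat
                                    (fun v => if agree v then N else 2)%nat).
    + apply computable_cond; auto with computable.
    + apply computable_cond; auto with computable.
    + intros [[s y] n]. simpl fst. rewrite Hagree. destruct (Bool.eqb _ _); lia.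
    + intros [[s y] n]. simpl fst. rewrite Hagree. apply bet_factor_inv_INR.
  - split; [apply bet_nil | apply bet_snoc].
Qed.

Lemma real_growth_function_linear : real_growth_function (fun n => INR n * x).
Proof.
  pose proof x_ge0. split; [| split; [| split]].
  - exists (fun d _ => INR d * x). split.
    + apply (recursive_rat_on_div _ _ (fun v => fst (Cantor.of_nat (nth 0 v 0%nat))) (fun _ => N));
        auto with computable.
      intros [d n]. simpl. rewrite of_nat_cpair. reflexivity.
    + intros d n. rewrite Rminus_diag, Rabs_R0. apply Rinv_0_lt_compat, pow_lt. lra.
  - intro n. apply Rmult_le_pos; [apply pos_INR | assumption].
  - intros n m Hnm. apply Rmult_le_compat_r; [assumption | now apply le_INR].
  - intro M. destruct (INR_unbounded (M * INR N)) as [n Hn]. exists n.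
    pose proof INR_N_pos. unfold x. apply Rmult_lt_reg_r with (INR N); [lra |].
    rewrite Rmult_assoc, Rinv_l, Rmult_1_r by lra. lra.
Qed.

End RecursiveBetting.

(** * Frequency tests *)

Lemma psum_ext u v n : (forall k, u k = v k) -> psum u n = psum v n.
Proof. intro Huv. induction n as [|n IHn]; simpl; [reflexivity |]. now rewrite IHn, Huv. Qed.

Lemma psum_mult_r u c n : psum (fun k => u k * c) n = psum u n * c.
Proof. induction n as [|n IHn]; simpl; [ring |]. rewrite IHn. ring. Qed.

Lemma psum_le_mono u n m : (forall k, 0 <= u k) -> (n <= m)%nat -> psum u n <= psum u m.
Proof. intro Hu. induction 1 as [|m _ IH]; simpl; [lra |]. specialize (Hu m). lra. Qed.

Lemma psum_add_one u v n : (forall k, u k + v k = 1) -> psum u n + psum v n = INR n.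
Proof.
  intro Huv. induction n as [|n IHn]; [simpl; ring |].
  cbn [psum]. rewrite S_INR. specialize (Huv n). lra.
Qed.

Lemma psum_complement_diverges u v :
  (forall k, 0 <= u k) -> (forall k, u k + v k = 1) ->
  is_lim_seq (psum u) p_infty \/ is_lim_seq (psum v) p_infty.
Proof.
  intros Hu Huv.
  destruct (classic (is_lim_seq (psum u) p_infty)) as [Hdiv | Hbdd]; [now left | right].
  assert (Hbound : exists B, forall n, psum u n <= B).
  { apply NNPP. intro Hunb. apply Hbdd, is_lim_seq_spec. intro M.
    destruct (not_all_ex_not _ _ (fun H => Hunb (ex_intro _ M H))) as [N HN].
    exists N. intros n Hn. pose proof (psum_le_mono u N n Hu Hn). lra. }
  destruct Hbound as [B HB]. apply is_lim_seq_spec. intro M.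
  destruct (INR_unbounded (M + B)) as [N HN]. exists N. intros n Hn.
  pose proof (psum_add_one u v n Huv). pose proof (HB n). apply le_INR in Hn. lra.
Qed.

Lemma is_lim_seq_selected_mean (sel u : nat -> R) (c : R) :
  (forall k, sel k * u k = sel k * c) -> is_lim_seq (psum sel) p_infty ->
  is_lim_seq (fun n => psum (fun k => sel k * u k) n / psum sel n) c.
Proof.
  intros Hsel Hdiv. apply is_lim_seq_spec in Hdiv. destruct (Hdiv 0) as [N HN].
  apply (is_lim_seq_ext_loc (fun _ => c)); [| apply is_lim_seq_const].
  exists N. intros n Hn. specialize (HN n Hn).
  rewrite (psum_ext _ (fun k => sel k * c)) by auto. rewrite psum_mult_r. field. lra.
Qed.

Definition select_bit (omega : path) (c : bool) : selection :=
  fun s => Bool.eqb (omega (length s)) c.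

Lemma rec_temporal_select_bit omega c : recursive_path omega -> rec_temporal (select_bit omega c).
Proof.
  intro Homega. split; [| intros s t Hst; unfold select_bit; now rewrite Hst].
  apply (recursive_on_computable _ _
    (fun v => Nat.b2n (nat_of_bool (omega (Nat.log2 (S (nth 0 v 0%nat)))) =? nat_of_bool c))).
  - apply computable_eqb; [apply computable_path |]; auto with computable.
  - intro s. simpl. fold (sit_code s). rewrite <- length_sit_code.
    unfold select_bit. now destruct (omega (length s)), c.
Qed.

Lemma not_sel_random_recursive (SS : selection -> Prop) omega a b :
  0 < a -> b < 1 -> recursive_path omega -> (forall S, rec_temporal S -> SS S) ->
  ~ sel_random SS omega a b.
Proof.
  intros Ha Hb Homega HSS Hrand.
  set (sel c k := b2R (select_bit omega c (prefix omega k))).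
  assert (Hsel : forall c k t, sel c k * (b2R (omega k) - t) = sel c k * (b2R c - t)).
  { intros c k t. unfold sel, select_bit. rewrite length_prefix.
    now destruct (omega k), c; simpl; ring. }
  destruct (psum_complement_diverges (sel true) (sel false)) as [Hdiv | Hdiv].
  - intro k. unfold sel. destruct (select_bit _ _ _); simpl; lra.
  - intro k. unfold sel, select_bit. destruct (omega (length (prefix omega k))); simpl; ring.
  - destruct (Hrand _ (HSS _ (rec_temporal_select_bit omega true Homega)) Hdiv) as [_ Hsup].
    rewrite (is_LimSup_seq_unique _ (1 - b)) in Hsup; [simpl in Hsup; lra |].
    apply is_lim_LimSup_seq, (is_lim_seq_selected_mean (sel true) _ (b2R true - b)); auto.
  - destruct (Hrand _ (HSS _ (rec_temporal_select_bit omega false Homega)) Hdiv) as [Hinf _].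
    rewrite (is_LimInf_seq_unique _ (- a)) in Hinf; [simpl in Hinf; lra |].
    apply is_lim_LimInf_seq. replace (- a) with (b2R false - a) by (simpl; ring).
    apply (is_lim_seq_selected_mean (sel false)); auto.
Qed.

Lemma exists_bet_supermartingale omega a b : 0 < a -> b < 1 ->
  exists N, (0 < N)%nat /\ test_supermartingale (bet omega (/ INR N)) a b.
Proof.
  intros Ha Hb. destruct (archimed_cor1 (Rmin a (1 - b) / 2)) as [N [HN HNpos]].
  { apply Rmin_case; lra. }
  exists N. split; [exact HNpos |].
  apply bet_test_supermartingale; [apply Rlt_le, Rinv_0_lt_compat, lt_0_INR, HNpos | |];
    pose proof (Rmin_l a (1 - b)); pose proof (Rmin_r a (1 - b)); lra.
Qed.

Theorem proposition26 (omega : path) (a b : R)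
  (Ha : 0 < a) (Hab : a <= b) (Hb : b < 1) :
  (wCH_random omega a b -> ~ recursive_path omega) /\
  (forall SS : selection -> Prop,
      countable_set SS -> (forall S, rec_temporal S -> SS S) ->
      sel_random SS omega a b -> ~ recursive_path omega) /\
  (ML_random omega a b -> ~ recursive_path omega) /\
  (wML_random omega a b -> ~ recursive_path omega) /\
  (C_random omega a b -> ~ recursive_path omega) /\
  (S_random omega a b -> ~ recursive_path omega).
Proof.
  destruct (exists_bet_supermartingale omega a b Ha Hb) as [N [HN Hsup]].
  assert (Hx : 0 < / INR N) by apply Rinv_0_lt_compat, lt_0_INR, HN.
  pose proof (LimSup_bet_prefix omega _ Hx) as Hunbounded.
  split; [| split; [| split; [| split; [| split]]]].
  - intros Hrand Homega.
    exact (not_sel_random_recursive _ omega a b Ha Hb Homega (fun _ HS => HS) Hrand).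
  - intros SS _ HSS Hrand Homega.
    exact (not_sel_random_recursive SS omega a b Ha Hb Homega HSS Hrand).
  - intros Hrand Homega. apply Hrand. exists (bet omega (/ INR N)). auto using F_ML_bet.
  - intros Hrand Homega. apply Hrand. exists (bet omega (/ INR N)). auto using F_wML_bet.
  - intros Hrand Homega. apply Hrand. exists (bet omega (/ INR N)). auto using F_C_bet.
  - intros Hrand Homega. apply Hrand. exists (bet omega (/ INR N)), (fun n => INR n * / INR N).
    split; [| split; [| split]]; auto using F_C_bet, real_growth_function_linear.
    apply LimSup_bet_prefix_linear, Rlt_le, Hx.
Qed.
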